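(* Let $\mathbb{C}=(\mathbf{C},0,\mathbf{D},\mathcal{R})$ be a reactive system with redex RPOs, and let $L$ be an IPO-closed class of arrows (contexts) of $\mathbf{C}$. Then $L$-bisimilarity $\sim^{L}$ is a congruence: for all terms $P,Q:0\to I$ and every arrow $C[-]:I\to J$ of $\mathbf{C}$, if $P\sim^{L}Q$ then $C[P]\sim^{L}C[Q]$.
   Context: A reactive system consists of a category $\mathbf{C}$, a distinguished object $0$, a composition-reflecting subcategory $\mathbf{D}$ of reactive contexts (i.e. $d'\circ d\in\mathbf{D}$ implies $d,d'\in\mathbf{D}$), and a set $\mathcal{R}\subseteq\bigcup_{I}\mathbf{C}(0,I)\times\mathbf{C}(0,I)$ of reduction rules. Terms are arrows with domain $0$; for an arrow $C[-]$ we write $C[P]$ for $C[-]\circ P$. The reduction relation is $P\rightsquigarrow Q$ iff $P=d\circ l$ and $Q=d\circ r$ for some $\langle l,r\rangle\in\mathcal{R}$ and $d\in\mathbf{D}$. Given a commuting square $c_1\circ a_1=c_2\circ a_2$ (with $a_1:K\to I_2$, $a_2:K\to I_3$, $c_1:I_2\to I_4$, $c_2:I_3\to I_4$), a candidate is a tuple $\langle I_5,e,f,g\rangle$ with $e:I_2\to I_5$, $f:I_3\to I_5$, $g:I_5\to I_4$, $e\circ a_1=f\circ a_2$, $g\circ e=c_1$, $g\circ f=c_2$. An RPO is a candidate $\langle I_5,e,f,g\rangle$ such that for every candidate $\langle I_6,e',f',g'\rangle$ there is a unique $h:I_5\to I_6$ with $h\circ e=e'$, $h\circ f=f'$, $g'\circ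 h=g$. The square is an IPO if $\langle I_4,c_1,c_2,\mathrm{id}_{I_4}\rangle$ is an RPO for it. A redex square is a commuting square $C[-]\circ P=d\circ l$ with $P$ a term, $\langle l,r\rangle\in\mathcal{R}$, $d\in\mathbf{D}$; the reactive system has redex RPOs if every redex square has an RPO. The IPO transition system has transitions $P\xrightarrow{C[-]}_I d\circ r$ whenever $d\in\mathbf{D}$, $\langle l,r\rangle\in\mathcal{R}$ and the square $C[-]\circ P=d\circ l$ is an IPO. For a class $L$ of arrows, a symmetric relation $\mathcal{R}'$ on terms is an $L$-bisimulation if whenever $P\,\mathcal{R}'\,Q$ and $P\xrightarrow{C[-]}_I P'$: if $C[-]\in L$ then $Q\xrightarrow{C[-]}_I Q'$ for some $Q'$ with $P'\,\mathcal{R}'\,Q'$; otherwise $C[Q]\rightsquigarrow Q'$ for some $Q'$ with $P'\,\mathcal{R}'\,Q'$. $L$-bisimilarity $\sim^L$ is the largest $L$-bisimulation. $L$ is IPO-closed if whenever a commuting square $b\circ a=d\circ c$ (with $a,c$ having a common domain, $b,d$ a common codomain) is an IPO and $b\in L$, then $c\in L$. *)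

Set Implicit Arguments.
Set Universe Polymorphism.

(** A (locally small, Type-valued) category; arrows are compared with
    Leibniz equality. *)
Record Category := {
  Ob : Type;
  Hom : Ob -> Ob -> Type;
  comp : forall {A B C : Ob}, Hom B C -> Hom A B -> Hom A C;
  idm : forall (A : Ob), Hom A A;
  comp_assoc : forall A B C D (f : Hom A B) (g : Hom B C) (h : Hom C D),
      comp h (comp g f) = comp (comp h g) f;
  comp_id_l : forall A B (f : Hom A B), comp (idm B) f = f;
  comp_id_r : forall A B (f : Hom A B), comp f (idm A) = f
}.

Arguments comp {c A B C} _ _.
Arguments idm {c} A.
Arguments Hom {c} _ _.

Definition ArrowClass (C : Category) := forall (A B : Ob C), @Hom C A B -> Prop.

Record ReactiveSystem := {
  rs_cat : Category;
  rs_zero : Ob rs_cat;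
  (* the subcategory D of reactive contexts (on all objects) *)
  rs_D : ArrowClass rs_cat;
  rs_D_id : forall A, rs_D _ _ (idm A);
  rs_D_comp : forall A B C (d : @Hom rs_cat A B) (d' : @Hom rs_cat B C),
      rs_D _ _ d -> rs_D _ _ d' -> rs_D _ _ (comp d' d);
  rs_D_reflect : forall A B C (d : @Hom rs_cat A B) (d' : @Hom rs_cat B C),
      rs_D _ _ (comp d' d) -> rs_D _ _ d /\ rs_D _ _ d';
  rs_rules : forall (I : Ob rs_cat),
      @Hom rs_cat rs_zero I -> @Hom rs_cat rs_zero I -> Prop
}.

Section RS.
Variable S : ReactiveSystem.
Notation C := (rs_cat S).
Notation O := (Ob C).
Notation "g ∘ f" := (comp g f) (at level 40, left associativity).
Notation z := (rs_zero S).

Definition reduces {J : O} (P Q : @Hom C z J) : Prop :=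
  exists (I : O) (l r : @Hom C z I) (d : @Hom C I J),
    rs_rules S _ l r /\ rs_D S _ _ d /\ P = d ∘ l /\ Q = d ∘ r.

Definition candidate {K I2 I3 I4 : O}
  (a1 : @Hom C K I2) (a2 : @Hom C K I3) (c1 : @Hom C I2 I4) (c2 : @Hom C I3 I4)
  {I5 : O} (e : @Hom C I2 I5) (f : @Hom C I3 I5) (g : @Hom C I5 I4) : Prop :=
  e ∘ a1 = f ∘ a2 /\ g ∘ e = c1 /\ g ∘ f = c2.

Definition is_RPO {K I2 I3 I4 : O}
  (a1 : @Hom C K I2) (a2 : @Hom C K I3) (c1 : @Hom C I2 I4) (c2 : @Hom C I3 I4)
  {I5 : O} (e : @Hom C I2 I5) (f : @Hom C I3 I5) (g : @Hom C I5 I4) : Prop :=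
  candidate a1 a2 c1 c2 e f g /\
  forall (I6 : O) (e' : @Hom C I2 I6) (f' : @Hom C I3 I6) (g' : @Hom C I6 I4),
    candidate a1 a2 c1 c2 e' f' g' ->
    exists h : @Hom C I5 I6,
      (h ∘ e = e' /\ h ∘ f = f' /\ g' ∘ h = g) /\
      forall h' : @Hom C I5 I6,
        h' ∘ e = e' /\ h' ∘ f = f' /\ g' ∘ h' = g -> h' = h.

Definition is_IPO {K I2 I3 I4 : O}
  (a1 : @Hom C K I2) (a2 : @Hom C K I3) (c1 : @Hom C I2 I4) (c2 : @Hom C I3 I4)
  : Prop :=
  c1 ∘ a1 = c2 ∘ a2 /\ is_RPO a1 a2 c1 c2 c1 c2 (idm I4).

Definition has_redex_RPOs : Prop :=
  forall (I J K : O) (P : @Hom C z I) (Cx : @Hom C I J)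
         (l r : @Hom C z K) (d : @Hom C K J),
    rs_rules S _ l r -> rs_D S _ _ d -> Cx ∘ P = d ∘ l ->
    exists (I5 : O) (e : @Hom C I I5) (f : @Hom C K I5) (g : @Hom C I5 J),
      is_RPO P l Cx d e f g.

Definition ipo_trans {I J : O} (P : @Hom C z I) (Cx : @Hom C I J)
  (P' : @Hom C z J) : Prop :=
  exists (K : O) (l r : @Hom C z K) (d : @Hom C K J),
    rs_D S _ _ d /\ rs_rules S _ l r /\ is_IPO P l Cx d /\ P' = d ∘ r.

Definition TermRel := forall (I : O), @Hom C z I -> @Hom C z I -> Prop.

Definition is_L_bisimulation (L : ArrowClass C) (Rl : TermRel) : Prop :=
  (forall I (P Q : @Hom C z I), Rl I P Q -> Rl I Q P) /\
  (forall I (P Q : @Hom C z I), Rl I P Q ->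
     forall J (Cx : @Hom C I J) (P' : @Hom C z J), ipo_trans P Cx P' ->
       (L I J Cx -> exists Q', ipo_trans Q Cx Q' /\ Rl J P' Q') /\
       (~ L I J Cx -> exists Q', reduces (Cx ∘ Q) Q' /\ Rl J P' Q')).

Definition L_bisimilar (L : ArrowClass C) : TermRel :=
  fun I P Q => exists Rl : TermRel, is_L_bisimulation L Rl /\ Rl I P Q.

Definition IPO_closed (L : ArrowClass C) : Prop :=
  forall (K I2 I3 I4 : O) (a : @Hom C K I2) (c : @Hom C K I3)
         (b : @Hom C I2 I4) (d : @Hom C I3 I4),
    is_IPO a c b d -> L I2 I4 b -> L K I3 c.

End RS.

(* Relate C[P] and C[Q] whenever P ~L Q; this relation is an L-bisimulation.
   A transition C[P] --D-->_I P' arises from a redex square for D∘C and P.  Its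
   RPO factors it as a transition P --E-->_I P0 followed by a reactive context G
   with P' = G∘P0, and the square C, E, D, G is an IPO (IPO splitting).  If
   D ∈ L then E ∈ L by IPO-closure, and the answering transition of Q pastes
   onto that IPO to give a D-transition of C[Q]; if D ∉ L, whatever Q answers to
   E yields a reduction of E[Q], which G carries to a reduction of D[C[Q]]. *)
From Stdlib Require Import Classical.
Set Implicit Arguments.

Local Notation "g ∘ f" := (comp g f) (at level 40, left associativity).

Section ReactiveSystemTheory.

Variable S : ReactiveSystem.

Local Notation Ob := (Ob (rs_cat S)).
Local Notation Term I := (@Hom (rs_cat S) (rs_zero S) I).

Lemma candidate_refl (K I2 I3 I4 : Ob) (a1 : Hom K I2) (a2 : Hom K I3)
  (c1 : Hom I2 I4) (c2 : Hom I3 I4) :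
  c1 ∘ a1 = c2 ∘ a2 -> candidate S a1 a2 c1 c2 c1 c2 (idm I4).
Proof.
  intros Hc. split; [exact Hc | split; apply comp_id_l].
Qed.

Lemma rpo_mediator_id (K I2 I3 I4 I5 : Ob) (a1 : Hom K I2) (a2 : Hom K I3)
  (c1 : Hom I2 I4) (c2 : Hom I3 I4) (e : Hom I2 I5) (f : Hom I3 I5) (g : Hom I5 I4)
  (h : Hom I5 I5) :
  is_RPO S a1 a2 c1 c2 e f g -> h ∘ e = e -> h ∘ f = f -> g ∘ h = g -> h = idm I5.
Proof.
  intros [Hcand Hu] He Hf Hg.
  destruct (Hu I5 e f g Hcand) as [k [_ Hk]].
  transitivity k; [apply Hk; auto | symmetry; apply Hk].
  split; [apply comp_id_l | split; [apply comp_id_l | apply comp_id_r]].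
Qed.

Lemma rpo_is_ipo (K I2 I3 I4 I5 : Ob) (a1 : Hom K I2) (a2 : Hom K I3)
  (c1 : Hom I2 I4) (c2 : Hom I3 I4) (e : Hom I2 I5) (f : Hom I3 I5) (g : Hom I5 I4) :
  is_RPO S a1 a2 c1 c2 e f g -> is_IPO S a1 a2 e f.
Proof.
  intros Hrpo. pose proof Hrpo as [[Hc [Hge Hgf]] Hu].
  split; [exact Hc | split; [apply candidate_refl; exact Hc |]].
  intros I6 e' f' g' [Hc' [He' Hf']].
  destruct (Hu I6 e' f' (g ∘ g')) as [h [[Hhe [Hhf Hgh]] Huniq]].
  { split; [exact Hc' | split; rewrite <- comp_assoc; congruence]. }
  assert (Hg'h : g' ∘ h = idm I5).
  { apply (rpo_mediator_id _ Hrpo);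
      [rewrite <- comp_assoc; congruence .. | rewrite comp_assoc; exact Hgh]. }
  exists h. split; [auto |].
  intros h' [H1 [H2 H3]]. apply Huniq.
  split; [exact H1 | split; [exact H2 |]].
  rewrite <- comp_assoc, H3. apply comp_id_r.
Qed.

Lemma ipo_is_rpo (K I2 I3 I4 I5 : Ob) (a1 : Hom K I2) (a2 : Hom K I3)
  (c1 : Hom I2 I4) (c2 : Hom I3 I4) (e : Hom I2 I5) (f : Hom I3 I5) (g : Hom I5 I4) :
  is_IPO S a1 a2 e f -> g ∘ e = c1 -> g ∘ f = c2 ->
  (exists X (u : Hom I2 X) (v : Hom I3 X) (w : Hom X I4), is_RPO S a1 a2 c1 c2 u v w) ->
  is_RPO S a1 a2 c1 c2 e f g.
Proof.
  intros [Hc [_ Hipo]] Hge Hgf [X [u [v [w Hrpo]]]].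
  pose proof Hrpo as [[Huc [Hwu Hwv]] Hu].
  destruct (Hu I5 e f g (conj Hc (conj Hge Hgf))) as [k [[Hku [Hkv Hgk]] _]].
  destruct (Hipo X u v k (conj Huc (conj Hku Hkv))) as [m [[Hme [Hmf Hkm]] _]].
  assert (Hwm : w ∘ m = g) by (rewrite <- Hgk, <- comp_assoc, Hkm; apply comp_id_r).
  assert (Hmk : m ∘ k = idm X).
  { apply (rpo_mediator_id _ Hrpo);
      [rewrite <- comp_assoc; congruence .. | rewrite comp_assoc, Hwm; exact Hgk]. }
  split; [split; [exact Hc | split; assumption] |].
  intros I6 e'' f'' g'' Hcand.
  destruct (Hu I6 e'' f'' g'' Hcand) as [n [[Hnu [Hnv Hgn]] Hnuniq]].
  destruct Hcand as [_ [He'' Hf'']].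
  exists (n ∘ m). split.
  - split; [| split];
      [rewrite <- comp_assoc; congruence .. | rewrite comp_assoc, Hgn; exact Hwm].
  - intros h' [H1 [H2 H3]].
    assert (Hh'k : h' ∘ k = n).
    { apply Hnuniq. split; [| split];
        [rewrite <- comp_assoc; congruence .. | rewrite comp_assoc, H3; exact Hgk]. }
    rewrite <- Hh'k, <- comp_assoc, Hkm. symmetry; apply comp_id_r.
Qed.

Lemma ipo_paste (K I2 I3 J J' I5 : Ob) (a1 : Hom K I2) (a2 : Hom K I3)
  (c : Hom I2 J) (d : Hom J J') (c2 : Hom I3 J')
  (e : Hom I2 I5) (f : Hom I3 I5) (g : Hom I5 J') :
  is_RPO S a1 a2 (d ∘ c) c2 e f g -> is_IPO S c e d g -> is_IPO S (c ∘ a1) a2 d c2.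
Proof.
  intros [[Hc [Hge Hgf]] Hu] [_ [_ Hur]].
  assert (Hco : d ∘ (c ∘ a1) = c2 ∘ a2).
  { rewrite comp_assoc, <- Hge, <- comp_assoc, Hc, comp_assoc, Hgf. reflexivity. }
  split; [exact Hco | split; [apply candidate_refl; exact Hco |]].
  intros I6 e' f' g' [Hc' [He' Hf']].
  assert (Hcand : candidate S a1 a2 (d ∘ c) c2 (e' ∘ c) f' g').
  { split; [rewrite <- comp_assoc; exact Hc' |].
    split; [rewrite comp_assoc, He'; reflexivity | exact Hf']. }
  destruct (Hu I6 _ _ _ Hcand) as [p [[Hpe [Hpf Hgp]] Hpu]].
  destruct (Hur I6 e' p g') as [h [[Hhd [Hhg Hgh]] Hhu]].
  { split; [symmetry; exact Hpe | split; assumption]. }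
  exists h. split.
  - split; [exact Hhd |]. split; [rewrite <- Hgf, comp_assoc, Hhg; exact Hpf | exact Hgh].
  - intros h' [H1 [H2 H3]]. apply Hhu. split; [exact H1 | split; [| exact H3]].
    apply Hpu. split; [rewrite <- comp_assoc, Hge, comp_assoc, H1; reflexivity |].
    split; [rewrite <- comp_assoc, Hgf; exact H2 |].
    rewrite comp_assoc, H3. apply comp_id_l.
Qed.

Lemma ipo_split (K I2 I3 J J' I5 : Ob) (a1 : Hom K I2) (a2 : Hom K I3)
  (c : Hom I2 J) (d : Hom J J') (c2 : Hom I3 J')
  (e : Hom I2 I5) (f : Hom I3 I5) (g : Hom I5 J') :
  is_IPO S (c ∘ a1) a2 d c2 -> is_RPO S a1 a2 (d ∘ c) c2 e f g -> is_IPO S c e d g.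
Proof.
  intros [_ [_ Hou]] Hrpo. pose proof Hrpo as [[Hc [Hge Hgf]] Hu].
  split; [symmetry; exact Hge | split; [apply candidate_refl; symmetry; exact Hge |]].
  intros I6 e' f' g' [Hc' [He' Hf']].
  assert (Hc'f : e' ∘ (c ∘ a1) = (f' ∘ f) ∘ a2).
  { rewrite comp_assoc, Hc', <- !comp_assoc, Hc. reflexivity. }
  destruct (Hou I6 e' (f' ∘ f) g') as [h [[Hhd [Hhf Hgh]] Hhu]].
  { split; [exact Hc'f | split; [exact He' | rewrite comp_assoc, Hf'; exact Hgf]]. }
  assert (Hhg : h ∘ g = f').
  { destruct (Hu I6 (e' ∘ c) (f' ∘ f) g') as [k [_ Hk]].
    { split; [rewrite <- comp_assoc; exact Hc'f |].
      split; [rewrite comp_assoc, He'; reflexivity | rewrite comp_assoc, Hf'; exact Hgf]. }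
    transitivity k; [apply Hk | symmetry; apply Hk].
    - split; [rewrite <- comp_assoc, Hge, comp_assoc, Hhd; reflexivity |].
      split; [rewrite <- comp_assoc, Hgf; exact Hhf |].
      rewrite comp_assoc, Hgh. apply comp_id_l.
    - split; [symmetry; exact Hc' | split; [reflexivity | exact Hf']]. }
  exists h. split; [auto |].
  intros h' [H1 [H2 H3]]. apply Hhu. split; [exact H1 |].
  split; [rewrite <- Hgf, comp_assoc, H2; reflexivity | exact H3].
Qed.

Lemma reduces_context {J J' : Ob} {X Y : Term J} {g : Hom J J'} :
  rs_D S _ _ g -> reduces S X Y -> reduces S (g ∘ X) (g ∘ Y).
Proof.
  intros Dg [K [l [r [d [Hrule [Dd [-> ->]]]]]]].
  exists K, l, r, (g ∘ d).
  split; [exact Hrule | split; [apply rs_D_comp; assumption | split; apply comp_assoc]].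
Qed.

Lemma ipo_trans_reduces {I J : Ob} {P : Term I} {c : Hom I J} {P' : Term J} :
  ipo_trans S P c P' -> reduces S (c ∘ P) P'.
Proof.
  intros [K [l [r [d [Dd [Hrule [[Hc _] ->]]]]]]].
  exists K, l, r, d. auto.
Qed.

Section RedexRPOs.

Hypothesis redex_rpos : has_redex_RPOs S.

Lemma ipo_trans_context_inv {I J J' : Ob} {P : Term I} {c : Hom I J}
  {d : Hom J J'} {P' : Term J'} :
  ipo_trans S (c ∘ P) d P' ->
  exists I5 (e : Hom I I5) (g : Hom I5 J') (P0 : Term I5),
    ipo_trans S P e P0 /\ is_IPO S c e d g /\ rs_D S _ _ g /\ P' = g ∘ P0.
Proof.
  intros [K [l [r [d' [Dd' [Hrule [Hipo ->]]]]]]].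
  assert (Hsq : (d ∘ c) ∘ P = d' ∘ l) by (rewrite <- comp_assoc; exact (proj1 Hipo)).
  destruct (redex_rpos _ _ _ _ _ _ _ _ Hrule Dd' Hsq) as [I5 [e [f [g Hrpo]]]].
  pose proof Hrpo as [[_ [_ Hgf]] _].
  assert (Dg : rs_D S _ _ g /\ rs_D S _ _ f).
  { apply and_comm, rs_D_reflect. rewrite Hgf. exact Dd'. }
  exists I5, e, g, (f ∘ r).
  split; [| split; [| split]].
  - exists K, l, r, f. split; [tauto |].
    split; [exact Hrule | split; [eapply rpo_is_ipo; exact Hrpo | reflexivity]].
  - eapply ipo_split; eassumption.
  - tauto.
  - rewrite comp_assoc, Hgf. reflexivity.
Qed.

Lemma ipo_trans_context {I J J' I5 : Ob} {Q : Term I} {c : Hom I J}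
  {d : Hom J J'} {e : Hom I I5} {g : Hom I5 J'} {Q0 : Term I5} :
  is_IPO S c e d g -> rs_D S _ _ g -> ipo_trans S Q e Q0 ->
  ipo_trans S (c ∘ Q) d (g ∘ Q0).
Proof.
  intros Hsq Dg [K [l [r [d' [Dd' [Hrule [Hipo ->]]]]]]].
  assert (Dgd' : rs_D S _ _ (g ∘ d')) by (apply rs_D_comp; assumption).
  exists K, l, r, (g ∘ d').
  split; [exact Dgd' | split; [exact Hrule | split; [| apply comp_assoc]]].
  apply (ipo_paste (e := e) (f := d') (g := g)); [| exact Hsq].
  apply ipo_is_rpo; [exact Hipo | symmetry; exact (proj1 Hsq) | reflexivity |].
  apply (redex_rpos _ _ _ _ _ _ _ _ Hrule Dgd').
  rewrite (proj1 Hsq), <- comp_assoc, (proj1 Hipo), comp_assoc. reflexivity.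
Qed.

End RedexRPOs.

Section Bisimilarity.

Variable L : ArrowClass (rs_cat S).

Lemma L_bisimilar_sym (I : Ob) (P Q : Term I) :
  L_bisimilar S L I P Q -> L_bisimilar S L I Q P.
Proof.
  intros [Rl [Hbis HPQ]]. exists Rl. split; [exact Hbis | apply (proj1 Hbis); exact HPQ].
Qed.

Lemma L_bisimilar_step (I J : Ob) (P Q : Term I) (c : Hom I J) (P' : Term J) :
  L_bisimilar S L I P Q -> ipo_trans S P c P' ->
  (L I J c -> exists Q', ipo_trans S Q c Q' /\ L_bisimilar S L J P' Q') /\
  (~ L I J c -> exists Q', reduces S (c ∘ Q) Q' /\ L_bisimilar S L J P' Q').
Proof.
  intros [Rl [Hbis HPQ]] Htr.
  assert (HRl : forall J (X Y : Term J), Rl J X Y -> L_bisimilar S L J X Y)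
    by (intros; exists Rl; auto).
  destruct (proj2 Hbis _ _ _ HPQ _ c P' Htr) as [HL HnL].
  split; intros Hc;
    [destruct (HL Hc) as [Q' [HQ HR]] | destruct (HnL Hc) as [Q' [HQ HR]]]; eauto.
Qed.

Lemma L_bisimilar_reduces (I J : Ob) (P Q : Term I) (c : Hom I J) (P' : Term J) :
  L_bisimilar S L I P Q -> ipo_trans S P c P' ->
  exists Q', reduces S (c ∘ Q) Q' /\ L_bisimilar S L J P' Q'.
Proof.
  intros HPQ Htr. destruct (L_bisimilar_step HPQ Htr) as [HL HnL].
  destruct (classic (L I J c)) as [Hc | Hc]; [| exact (HnL Hc)].
  destruct (HL Hc) as [Q' [HQ HR]]. exists Q'. split; [apply ipo_trans_reduces |]; assumption.
Qed.

Definition context_closure (Rl : TermRel S) : TermRel S :=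
  fun J X Y => exists I (P Q : Term I) (c : Hom I J), Rl I P Q /\ X = c ∘ P /\ Y = c ∘ Q.

Lemma context_closure_L_bisimulation :
  has_redex_RPOs S -> IPO_closed S L ->
  is_L_bisimulation L (context_closure (L_bisimilar S L)).
Proof.
  intros redex_rpos HL. split.
  - intros J X Y [I [P [Q [c [HPQ [-> ->]]]]]].
    exists I, Q, P, c. split; [apply L_bisimilar_sym; exact HPQ | auto].
  - intros J X Y [I [P [Q [c [HPQ [-> ->]]]]]] J' d P' Htr.
    destruct (ipo_trans_context_inv redex_rpos Htr)
      as [I5 [e [g [P0 [HtrP [Hsq [Dg ->]]]]]]].
    split.
    + intros Ld.
      destruct (proj1 (L_bisimilar_step HPQ HtrP) (HL _ _ _ _ _ _ _ _ Hsq Ld))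
        as [Q0 [HtrQ HR]].
      exists (g ∘ Q0). split; [exact (ipo_trans_context redex_rpos Hsq Dg HtrQ) |].
      exists I5, P0, Q0, g. auto.
    + intros _.
      destruct (L_bisimilar_reduces HPQ HtrP) as [Q0 [Hred HR]].
      exists (g ∘ Q0). split; [| exists I5, P0, Q0, g; auto].
      rewrite comp_assoc, (proj1 Hsq), <- comp_assoc.
      apply reduces_context; assumption.
Qed.

End Bisimilarity.

End ReactiveSystemTheory.

Theorem mainTheorem1 (S : ReactiveSystem) (L : ArrowClass (rs_cat S)) :
  has_redex_RPOs S -> IPO_closed S L ->
  forall (I J : Ob (rs_cat S)) (P Q : @Hom (rs_cat S) (rs_zero S) I)
         (Cx : @Hom (rs_cat S) I J),
    L_bisimilar S L I P Q -> L_bisimilar S L J (comp Cx P) (comp Cx Q).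
Proof.
  intros redex_rpos HL I J P Q Cx HPQ.
  exists (context_closure (L_bisimilar S L)).
  split; [apply context_closure_L_bisimulation; assumption |].
  exists I, P, Q, Cx. auto.
Qed.
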